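(* Let $X',X''$ be a disjoint cover of an index set $X$ (with nonempty value sets for each index), $\Pi':=\Pi X'$, $\Pi'':=\Pi X''$. Suppose that for every set $A$ (among subsets of $\Pi'$, $\Pi''$ and $\Pi' \times\Pi''$) a notion ''big subset of $A$'' is given such that $A\subseteq A$ is big and, whenever $B\subseteq C\subseteq A$ and $B\subseteq A$ is big, $C\subseteq A$ is big; call $B\subseteq A$ small iff $A-B\subseteq A$ is big. Assume (S*1): for all $\Sigma'\subseteq\Pi'$, $\Sigma''\subseteq\Pi''$ and $\Delta\subseteq\Sigma'\times\Sigma''$, $\Delta\subseteq\Sigma'\times\Sigma''$ is big iff there are $\Gamma'\subseteq\Sigma'$ big and $\Gamma''\subseteq\Sigma''$ big with $\Gamma'\times\Gamma''\subseteq\Delta$. Then for all $\Gamma'\subseteq\Sigma'\subseteq\Pi'$ and $\Gamma''\subseteq\Sigma''\subseteq\Pi''$: $\Gamma'\times\Gamma''\subseteq\Sigma'\times\Sigma''$ is small iff $\Gamma'\subseteq\Sigma'$ is small or $\Gamma''\subseteq\Sigma''$ is small.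
   Context: $\Pi X$ denotes the product of the value sets over the indices in $X$; $\Pi X=\Pi X'\times\Pi X''$ up to re-ordering. *)

From mathcomp Require Import all_boot.
From mathcomp Require Export boolp classical_sets.
Set Implicit Arguments. Unset Strict Implicit. Unset Printing Implicit Defensive.
Local Open Scope classical_set_scope.

Definition PiX (X : Type) (V : X -> Type) (S : set X) : Type :=
  forall i : {x : X | S x}, V (proj1_sig i).

(* A "bigness" notion on a type T: big A B means "B ⊆ A is big". *)
Definition bigness (T : Type) (big : set T -> set T -> Prop) : Prop :=
  (forall A : set T, big A A) /\
  (forall A B C : set T, B `<=` C -> C `<=` A -> big A B -> big A C).

Definition small (T : Type) (big : set T -> set T -> Prop) (A B : set T) : Prop :=
  big A (A `\` B).

From mathcomp Require Import all_boot.
From mathcomp Require Import boolp classical_sets.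
Local Open Scope classical_set_scope.

(* A rectangle [G1 * G2] misses [B1 * B2] exactly when one of its sides misses
   the corresponding side of [B1 * B2]. Hence, by (S*1), the complement of
   [Gam1 * Gam2] in [Sig1 * Sig2] is big iff it contains a rectangle with big
   sides, iff one of the sides lies in the complement of [Gam1] or of [Gam2];
   upward closure turns this into smallness of [Gam1] or of [Gam2]. Neither
   the structure of the index set nor the inclusions [Gam1 <= Sig1],
   [Gam2 <= Sig2] are needed. *)

Lemma setM_subsetC {T1 T2 : Type} (G1 B1 : set T1) (G2 B2 : set T2) :
  G1 `*` G2 `<=` ~` (B1 `*` B2) <-> G1 `<=` ~` B1 \/ G2 `<=` ~` B2.
Proof.
split=> [GB|[GB1|GB2] [a b] [/= G1a G2b] [B1a B2b]].
- have [[a [G1a B1a]]|G1B1] := pselect (exists a, G1 a /\ B1 a).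
    by right=> b G2b B2b; exact: (GB (a, b)).
  by left=> a G1a B1a; apply: G1B1; exists a.
- exact: GB1 G1a B1a.
- exact: GB2 G2b B2b.
Qed.

Lemma small_of_big_subset {T : Type} {big : set T -> set T -> Prop} {A B G : set T} :
  bigness big -> G `<=` A `\` B -> big A G -> small big A B.
Proof. by move=> [_ bigS] GAB; apply: bigS => // x []. Qed.

Section SmallRectangles.

Variables (T1 T2 : Type).
Variables (big1 : set T1 -> set T1 -> Prop) (big2 : set T2 -> set T2 -> Prop).
Variable big12 : set (T1 * T2) -> set (T1 * T2) -> Prop.
Hypotheses (hb1 : bigness big1) (hb2 : bigness big2).
Hypothesis big12_setM : forall (Sig1 : set T1) (Sig2 : set T2) (Delta : set (T1 * T2)),
  Delta `<=` Sig1 `*` Sig2 ->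
  (big12 (Sig1 `*` Sig2) Delta <->
   exists (Gam1 : set T1) (Gam2 : set T2),
     [/\ Gam1 `<=` Sig1, big1 Sig1 Gam1, Gam2 `<=` Sig2, big2 Sig2 Gam2
       & Gam1 `*` Gam2 `<=` Delta]).

Lemma small_setM (Gam1 Sig1 : set T1) (Gam2 Sig2 : set T2) :
  small big12 (Sig1 `*` Sig2) (Gam1 `*` Gam2) <->
  small big1 Sig1 Gam1 \/ small big2 Sig2 Gam2.
Proof.
have [big1_refl _] := hb1; have [big2_refl _] := hb2.
have DsubM : (Sig1 `*` Sig2) `\` (Gam1 `*` Gam2) `<=` Sig1 `*` Sig2 by move=> z [].
rewrite /small (big12_setM _ _ _ DsubM); split.
- move=> [G1 [G2 [G1S1 bigG1 G2S2 bigG2 GD]]].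
  have /setM_subsetC[GC1|GC2] : G1 `*` G2 `<=` ~` (Gam1 `*` Gam2).
    by move=> z /GD [].
  + left; apply: (small_of_big_subset hb1 _ bigG1) => a G1a.
    by split; [exact: G1S1 | exact: GC1].
  + right; apply: (small_of_big_subset hb2 _ bigG2) => b G2b.
    by split; [exact: G2S2 | exact: GC2].
- move=> [small1|small2].
  + exists (Sig1 `\` Gam1), Sig2; split=> //.
    by move=> [a b] [[S1a nG1a] S2b]; split=> // -[].
  + exists Sig1, (Sig2 `\` Gam2); split=> //.
    by move=> [a b] [S1a [S2b nG2b]]; split=> // -[].
Qed.

End SmallRectangles.

Theorem fact4p3 (X : Type) (V : X -> Type) (X' X'' : set X)
  (hdisj : X' `&` X'' = set0) (hcover : X' `|` X'' = setT)
  (hne : forall x : X, inhabited (V x))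
  (big1 : set (PiX V X') -> set (PiX V X') -> Prop)
  (big2 : set (PiX V X'') -> set (PiX V X'') -> Prop)
  (big12 : set (PiX V X' * PiX V X'') -> set (PiX V X' * PiX V X'') -> Prop)
  (hb1 : bigness big1) (hb2 : bigness big2) (hb12 : bigness big12)
  (S1 : forall (Sig1 : set (PiX V X')) (Sig2 : set (PiX V X''))
          (Delta : set (PiX V X' * PiX V X'')),
      Delta `<=` Sig1 `*` Sig2 ->
      (big12 (Sig1 `*` Sig2) Delta <->
       exists (Gam1 : set (PiX V X')) (Gam2 : set (PiX V X'')),
         [/\ Gam1 `<=` Sig1, big1 Sig1 Gam1, Gam2 `<=` Sig2, big2 Sig2 Gam2
           & Gam1 `*` Gam2 `<=` Delta])) :
  forall (Gam1 Sig1 : set (PiX V X')) (Gam2 Sig2 : set (PiX V X'')),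
    Gam1 `<=` Sig1 -> Gam2 `<=` Sig2 ->
    (small big12 (Sig1 `*` Sig2) (Gam1 `*` Gam2) <->
     small big1 Sig1 Gam1 \/ small big2 Sig2 Gam2).
Proof. by move=> Gam1 Sig1 Gam2 Sig2 _ _; exact: small_setM hb1 hb2 S1 _ _ _ _. Qed.
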